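(* Let $H_1,H_2$ be separable Hilbert spaces, $K\in B(H_1)$, $L\in B(H_2)$. Let $\{x_n\}_{n\geqslant1}$ be a $K$-frame for $H_1$ and $\{y_n\}_{n\geqslant1}$ an $L$-frame for $H_2$, with synthesis operators $T_1$ and $T_2$ respectively. If $\{x_n\oplus y_n\}_{n\geqslant1}$ is a $K\oplus L$-frame for $H_1\oplus H_2$, then $R(K)\subset T_1(N(T_2))$ and $R(L)\subset T_2(N(T_1))$.
   Context: $H_1\oplus H_2$ is the Hilbert space of pairs $x\oplus y$ with inner product $\langle x\oplus y,a\oplus b\rangle=\langle x,a\rangle+\langle y,b\rangle$; $(K\oplus L)(x\oplus y)=K(x)\oplus L(y)$. For a Hilbert space $H$ and $K\in B(H)$, $\{z_n\}_{n\geqslant1}$ is a $K$-frame if there are $A,B>0$ with $A\|K^*z\|^2\leq\sum_n|\langle z,z_n\rangle|^2\leq B\|z\|^2$ for all $z\in H$. Its synthesis operator is $T:\ell^2\to H$, $T(\{a_n\})=\sum_na_nz_n$. $R(\cdot)$ and $N(\cdot)$ denote range and kernel. *)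

From HB Require Import structures.
From mathcomp Require Import all_boot all_order all_algebra.
From mathcomp Require Import all_classical all_reals.
From mathcomp Require Import ereal topology normedtype sequences.
From mathcomp Require Import complex.
Set Implicit Arguments. Unset Strict Implicit. Unset Printing Implicit Defensive.
Import Order.TTheory GRing.Theory Num.Theory.
Local Open Scope ring_scope.

Section Hilbert.
Variable R : realType.
Local Notation C := (R[i]).

Definition sqmod (c : C) : R := complex.Re c ^+ 2 + complex.Im c ^+ 2.

Variable V : lmodType C.
Variable ip : V -> V -> C.   (* <x, y>, linear in x, conjugate-linear in y *)

Definition nsq (x : V) : R := complex.Re (ip x x).

Definition is_inner_product : Prop :=
  [/\ (forall a x y z, ip (a *: x + y) z = a * ip x z + ip y z),
      (forall x y, ip y x = conjc (ip x y)),
      (forall x, 0 <= complex.Re (ip x x)) &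
      (forall x, ip x x = 0 -> x = 0)].

Definition complete_ip : Prop :=
  forall u : nat -> V,
    (forall e : R, 0 < e -> exists N, forall m n, (N <= m)%N -> (N <= n)%N ->
         nsq (u m - u n) < e) ->
    exists l : V, forall e : R, 0 < e -> exists N, forall m, (N <= m)%N ->
         nsq (l - u m) < e.

Definition is_hilbert : Prop := is_inner_product /\ complete_ip.

Definition separable : Prop :=
  exists d : nat -> V, forall x (e : R), 0 < e -> exists n, nsq (x - d n) < e.

Definition bounded_op (K : V -> V) : Prop :=
  (forall a x y, K (a *: x + y) = a *: K x + K y) /\
  exists M : R, forall x, nsq (K x) <= M * nsq x.

Definition is_adjoint (K Ks : V -> V) : Prop :=
  forall x y, ip (K x) y = ip x (Ks y).

Definition frame_sum (z : V) (zs : nat -> V) : \bar R :=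
  (\sum_(n <oo) (sqmod (ip z (zs n)))%:E)%E.

Definition is_Kframe (K : V -> V) (zs : nat -> V) : Prop :=
  exists Ks, is_adjoint K Ks /\
  exists A B : R, 0 < A /\ 0 < B /\
    forall z, ((A * nsq (Ks z))%:E <= frame_sum z zs)%E /\
              (frame_sum z zs <= (B * nsq z)%:E)%E.

(* synthesis operator T({a_n}) = sum_n a_n z_n, as a relation:
   synth zs a h  <->  the series sum_n a_n z_n converges in H to h *)
Definition synth (zs : nat -> V) (a : nat -> C) (h : V) : Prop :=
  forall e : R, 0 < e -> exists N, forall m, (N <= m)%N ->
    nsq (h - \sum_(n < m) a n *: zs n) < e.

End Hilbert.

Definition in_l2 (R : realType) (a : nat -> R[i]) : Prop :=
  (\sum_(n <oo) (sqmod (a n))%:E < +oo)%E.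

Definition ip_sum (R : realType) (V1 V2 : lmodType R[i])
  (ip1 : V1 -> V1 -> R[i]) (ip2 : V2 -> V2 -> R[i]) :
  (V1 * V2)%type -> (V1 * V2)%type -> R[i] :=
  fun p q => ip1 p.1 q.1 + ip2 p.2 q.2.

Definition op_sum (V1 V2 : Type) (K : V1 -> V1) (L : V2 -> V2) :
  (V1 * V2)%type -> (V1 * V2)%type := fun p => (K p.1, L p.2).

Definition seq_sum (V1 V2 : Type) (x : nat -> V1) (y : nat -> V2) :
  nat -> (V1 * V2)%type := fun n => (x n, y n).

(* A Douglas-type range inclusion, proved variationally.
   Let (w_n) be an M-frame with bounds A, B and put Q z = sum_n |<z, w_n>|^2.  For a
   fixed u the energy J z = Q z / 2 - Re <z, M u> is bounded below, because
   Re <z, M u> = Re <u, M^* z> <= (|u|^2 / A + A |M^* z|^2) / 2 <= |u|^2 / (2 A) + Q z / 2.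
   Along a minimising sequence z_j the parallelogram law for Q makes the coefficient
   sequences (<z_j, w_n>)_n Cauchy in l^2; call their limit a.  The first-order
   condition at the infimum gives sum_n Re (<z, w_n> a_n^* ) = Re <z, M u> for all z,
   and choosing z to be the residual M u - sum_(n < m) a_n w_n, the Bessel bound shows
   that sum_n a_n w_n converges to M u.
   For the K (+) L-frame x_n (+) y_n and u (+) 0 this gives T_1 a = K u and T_2 a = 0;
   symmetrically for 0 (+) u. *)

From HB Require Import structures.
From mathcomp Require Import all_boot all_order all_algebra.
From mathcomp Require Import all_classical all_reals.
From mathcomp Require Import ereal topology normedtype sequences.
From mathcomp Require Import complex.
From mathcomp Require Import ring lra.
Import Order.TTheory GRing.Theory Num.Theory.
Import numFieldNormedType.Exports.
Local Open Scope classical_set_scope.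
Local Open Scope ring_scope.

Section ComplexPlane.
Context {R : realType}.
Implicit Types (p q r : R[i]) (s t : R).

Definition dotc p q : R := complex.Re p * complex.Re q + complex.Im p * complex.Im q.

Lemma ReD p q : complex.Re (p + q) = complex.Re p + complex.Re q.
Proof. by case: p q => a b [c d]. Qed.

Lemma ReB p q : complex.Re (p - q) = complex.Re p - complex.Re q.
Proof. by case: p q => a b [c d]. Qed.

Lemma ImB p q : complex.Im (p - q) = complex.Im p - complex.Im q.
Proof. by case: p q => a b [c d]. Qed.

Lemma ReJ p : complex.Re (conjc p) = complex.Re p.
Proof. by case: p. Qed.

Lemma Re_realM t p : complex.Re (t%:C%C * p) = t * complex.Re p.
Proof. by case: p => a b /=; simpc. Qed.

Lemma Re_sum (I : Type) (r : seq I) (P : pred I) (F : I -> R[i]) :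
  complex.Re (\sum_(i <- r | P i) F i) = \sum_(i <- r | P i) complex.Re (F i).
Proof. exact: (big_morph _ ReD (erefl : complex.Re (0 : R[i]) = 0)). Qed.

Lemma Re_mulJ p q : complex.Re (p * conjc q) = dotc p q.
Proof. by case: p q => a b [c d]; rewrite /dotc /=; simpc => /=; ring. Qed.

Lemma dotcC p q : dotc p q = dotc q p.
Proof. by rewrite /dotc mulrC (mulrC (complex.Im p)). Qed.

Lemma dotcBr p q r : dotc p (q - r) = dotc p q - dotc p r.
Proof. by rewrite /dotc ReB ImB; ring. Qed.

Lemma eq0_conjc_Re0 p : p = conjc p -> complex.Re p = 0 -> p = 0.
Proof. by case: p => a b /= [] b_eq ->; congr (_ +i* _)%C; lra. Qed.

Lemma sqmod_ge0 p : 0 <= sqmod p.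
Proof. by rewrite addr_ge0 // sqr_ge0. Qed.

Lemma sqmodB p q :
  sqmod (p - q) = (complex.Re p - complex.Re q) ^+ 2 + (complex.Im p - complex.Im q) ^+ 2.
Proof. by rewrite /sqmod ReB ImB. Qed.

Lemma sqmod_realMD t p q :
  sqmod (t%:C%C * p + q) = t ^+ 2 * sqmod p + 2 * t * dotc p q + sqmod q.
Proof. by case: p q => a b [c d]; rewrite /sqmod /dotc /=; simpc => /=; ring. Qed.

Lemma sqmodD_le p q : sqmod (p + q) <= 2 * sqmod p + 2 * sqmod q.
Proof.
case: p q => a b [c d]; rewrite /sqmod /=; simpc => /=.
by have := sqr_ge0 (a - c); have := sqr_ge0 (b - d); nra.
Qed.

Lemma dotc_amgm s p q : 0 < s -> 2 * `|dotc p q| <= s * sqmod p + sqmod q / s.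
Proof.
move=> s_gt0; case: p q => a b [c d]; rewrite /sqmod /dotc /=.
rewrite -(@ler_pM2l _ s) // mulrDr [s * (_ / s)]mulrC divfK ?gt_eqF //.
have := sqr_ge0 (s * a - c); have := sqr_ge0 (s * b - d).
have := sqr_ge0 (s * a + c); have := sqr_ge0 (s * b + d).
by case: (lerP 0 (a * c + b * d)) => h; [rewrite ger0_norm | rewrite ltr0_norm]; nra.
Qed.

Lemma dotc_sum_amgm (I : Type) (r : seq I) (P : pred I) (p q : I -> R[i]) s :
  0 < s ->
  2 * `|\sum_(i <- r | P i) dotc (p i) (q i)| <=
  s * \sum_(i <- r | P i) sqmod (p i) + (\sum_(i <- r | P i) sqmod (q i)) / s.
Proof.
move=> s_gt0; apply: le_trans (_ : 2 * \sum_(i <- r | P i) `|dotc (p i) (q i)| <= _).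
  by rewrite ler_pM2l // ler_norm_sum.
rewrite mulr_sumr mulr_sumr mulr_suml -big_split /=.
by apply: ler_sum => i _; exact: dotc_amgm.
Qed.

Lemma cvgn_sqmodB (p : nat -> R[i]) (a q : R[i]) :
  (fun i => complex.Re (p i)) @ \oo --> complex.Re a ->
  (fun i => complex.Im (p i)) @ \oo --> complex.Im a ->
  (fun i => sqmod (p i - q)) @ \oo --> sqmod (a - q).
Proof.
move=> cvRe cvIm; under eq_fun do rewrite sqmodB !expr2.
rewrite sqmodB !expr2.
have cvReB : (fun i => complex.Re (p i) - complex.Re q) @ \oo -->
    complex.Re a - complex.Re q by apply: cvgB => //; exact: cvg_cst.
have cvImB : (fun i => complex.Im (p i) - complex.Im q) @ \oo -->
    complex.Im a - complex.Im q by apply: cvgB => //; exact: cvg_cst.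
exact: cvgD (cvgM cvReB cvReB) (cvgM cvImB cvImB).
Qed.

End ComplexPlane.

Section RealSequences.
Context {R : realType}.
Implicit Types (u d : nat -> R).

Lemma nneseries_ge_sum u N : (forall n, 0 <= u n) ->
  ((\sum_(n < N) u n)%:E <= \sum_(n <oo) (u n)%:E)%E.
Proof.
move=> u_ge0; rewrite -sumEFin -(big_mkord xpredT (fun n => (u n)%:E)).
by apply: nneseries_lim_ge => n _ _; rewrite lee_fin.
Qed.

Lemma nneseries_le_ub u b : (forall n, 0 <= u n) ->
  (forall N, \sum_(n < N) u n <= b) -> (\sum_(n <oo) (u n)%:E <= b%:E)%E.
Proof.
move=> u_ge0 ub; apply: lime_le.
  by apply: is_cvg_nneseries => n _ _; rewrite lee_fin.
by apply: nearW => N; rewrite big_mkord sumEFin lee_fin.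
Qed.

Lemma sum_ord_split u m N : (m <= N)%N ->
  \sum_(n < N) u n = \sum_(n < m) u n + \sum_(m <= n < N) u n.
Proof. by move=> mN; rewrite -!(big_mkord xpredT u) (big_cat_nat (leq0n m) mN). Qed.

Lemma sum_ord_le u m N : (forall n, 0 <= u n) -> (m <= N)%N ->
  \sum_(n < m) u n <= \sum_(n < N) u n.
Proof. by move=> u_ge0 mN; rewrite (sum_ord_split u _ _ mN) lerDl sumr_ge0. Qed.

Lemma sum_tail_small u b : (forall n, 0 <= u n) ->
  (forall N, \sum_(n < N) u n <= b) ->
  forall e, 0 < e -> exists m0, forall m N, (m0 <= m)%N -> (m <= N)%N ->
    \sum_(m <= n < N) u n < e.
Proof.
move=> u_ge0 ub e e_gt0; set S := range (fun N => \sum_(n < N) u n).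
have supS : has_sup S by split; [exists (\sum_(n < 0) u n), 0%N | exists b => _ [N _ <-]].
have [_ [m0 _ <-] m0_near] := sup_adherent e_gt0 supS.
exists m0 => m N m0m mN.
have SN : \sum_(n < N) u n <= sup S by apply: sup_upper_bound => //; exists N.
have := sum_ord_le _ _ _ u_ge0 m0m; have := sum_ord_split u _ _ mN; lra.
Qed.

Lemma cvgn_sqr_dist_le u d :
  (forall i j, (u i - u j) ^+ 2 <= d i + d j) -> d @ \oo --> 0 -> cvgn u.
Proof.
move=> ud d0; apply/(@cauchy_cvgP R^o)/cauchy_exP => e e_gt0.
have e2 : 0 < e ^+ 2 / 2 by rewrite divr_gt0 // exprn_gt0.
have [N _ dN] := (cvgrPdist_lt _ _).1 d0 _ e2.
exists (u N), N => // n /= Nn; rewrite /ball /=.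
have := dN N (leqnn N); have := dN n Nn; have := ud N n.
rewrite /= !sub0r !normrN => h dn dN'; apply/ltr_normlP.
have := ler_norm (d N); have := ler_norm (d n); split; nra.
Qed.

End RealSequences.

Section FrameRange.
Variables (R : realType) (V : lmodType R[i]) (ip : V -> V -> R[i]).
Hypothesis ip_linearl : forall a x y z, ip (a *: x + y) z = a * ip x z + ip y z.
Hypothesis ipC : forall x y, ip y x = conjc (ip x y).
Hypothesis ip_ge0 : forall x, 0 <= complex.Re (ip x x).

Lemma ip0l z : ip 0 z = 0.
Proof.
have := ip_linearl 1 0 0 z; rewrite scaler0 add0r mul1r.
by move=> /(congr1 (fun c => c - ip 0 z)); rewrite subrr addrK.
Qed.

Lemma ipDl x y z : ip (x + y) z = ip x z + ip y z.
Proof. by have := ip_linearl 1 x y z; rewrite scale1r mul1r. Qed.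

Lemma ipZl a x z : ip (a *: x) z = a * ip x z.
Proof. by have := ip_linearl a x 0 z; rewrite addr0 ip0l addr0. Qed.

Lemma ipBl x y z : ip (x - y) z = ip x z - ip y z.
Proof. by rewrite addrC -scaleN1r ip_linearl mulN1r addrC. Qed.

Lemma ip_suml (I : Type) (r : seq I) (P : pred I) (a : I -> R[i]) (x : I -> V) z :
  ip (\sum_(i <- r | P i) a i *: x i) z = \sum_(i <- r | P i) a i * ip (x i) z.
Proof.
rewrite (big_morph (ip^~ z) (fun x y => ipDl x y z) (ip0l z)).
by apply: eq_bigr => i _; rewrite ipZl.
Qed.

Lemma ipBr x y z : ip z (x - y) = ip z x - ip z y.
Proof. by rewrite [LHS]ipC ipBl [ip z x]ipC [ip z y]ipC rmorphB. Qed.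

Lemma Re_ipC x y : complex.Re (ip y x) = complex.Re (ip x y).
Proof. by rewrite ipC ReJ. Qed.

Lemma ip_realMD t x y :
  complex.Re (ip (t%:C%C *: x + y) (t%:C%C *: x + y)) =
  t ^+ 2 * nsq ip x + 2 * t * complex.Re (ip x y) + nsq ip y.
Proof.
rewrite ip_linearl ReD Re_realM (Re_ipC _ x) (Re_ipC _ y) !ip_linearl !ReD !Re_realM /nsq.
by rewrite (Re_ipC x y); ring.
Qed.

Lemma ip_amgm s x y : 0 < s ->
  2 * complex.Re (ip x y) <= s * nsq ip x + nsq ip y / s.
Proof.
move=> s_gt0; have := ip_ge0 ((- s)%:C%C *: x + y); rewrite ip_realMD /nsq => h.
rewrite -(@ler_pM2l _ s) // mulrDr [s * (_ / s)]mulrC divfK ?gt_eqF //; nra.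
Qed.

Variables (w : nat -> V) (B : R).
Hypothesis bessel_ub : forall z, (frame_sum ip z w <= (B * nsq ip z)%:E)%E.

Definition coef n z := ip z (w n).

Lemma coefB n x y : coef n (x - y) = coef n x - coef n y.
Proof. exact: ipBl. Qed.

Definition bessel N z := \sum_(n < N) sqmod (coef n z).

Definition frame_quad z := sup (range (fun N => bessel N z)).

Lemma bessel_ge0 N z : 0 <= bessel N z.
Proof. by apply: sumr_ge0 => n _; exact: sqmod_ge0. Qed.

Lemma bessel_le N1 N2 z : (N1 <= N2)%N -> bessel N1 z <= bessel N2 z.
Proof. by apply: (sum_ord_le (fun n => sqmod (coef n z))) => n; exact: sqmod_ge0. Qed.

Lemma bessel_le_nsq N z : bessel N z <= B * nsq ip z.
Proof.
rewrite -lee_fin; apply: le_trans (bessel_ub z).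
by apply: nneseries_ge_sum => n; exact: sqmod_ge0.
Qed.

Lemma bessel_has_sup z : has_sup (range (fun N => bessel N z)).
Proof.
split; first by exists (bessel 0 z), 0%N.
by exists (B * nsq ip z) => _ [N _ <-]; exact: bessel_le_nsq.
Qed.

Lemma bessel_le_quad N z : bessel N z <= frame_quad z.
Proof. by apply: sup_upper_bound; [exact: bessel_has_sup | exists N]. Qed.

Lemma frame_quad_ge0 z : 0 <= frame_quad z.
Proof. exact: le_trans (bessel_ge0 0 z) (bessel_le_quad 0 z). Qed.

Lemma sqmod_coef_le_quad n z : sqmod (coef n z) <= frame_quad z.
Proof.
apply: le_trans (bessel_le_quad n.+1 z).
by rewrite /bessel big_ord_recr /= lerDr; exact: bessel_ge0.
Qed.

Lemma frame_quad_le_sum z : (frame_sum ip z w <= (frame_quad z)%:E)%E.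
Proof.
by apply: nneseries_le_ub => [n|N]; [exact: sqmod_ge0 | exact: bessel_le_quad].
Qed.

Lemma bessel_cvg z : (fun N => bessel N z) @ \oo --> frame_quad z.
Proof.
apply: nondecreasing_cvgn; first by move=> N1 N2; exact: bessel_le.
by case: (bessel_has_sup z).
Qed.

Definition bessel_polar N z x := \sum_(n < N) dotc (coef n z) (coef n x).

Definition frame_polar z x := (frame_quad (z + x) - frame_quad z - frame_quad x) / 2.

Lemma bessel_realMD N t z x : bessel N (t%:C%C *: z + x) =
  t ^+ 2 * bessel N z + 2 * t * bessel_polar N z x + bessel N x.
Proof.
rewrite /bessel /bessel_polar !mulr_sumr -!big_split /=.
by apply: eq_bigr => n _; rewrite /coef ip_linearl sqmod_realMD.
Qed.

Lemma bessel_polar_cvg z x : (fun N => bessel_polar N z x) @ \oo --> frame_polar z x.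
Proof.
have -> : (fun N => bessel_polar N z x) =
    fun N => (bessel N (z + x) - bessel N z - bessel N x) / 2.
  by apply: funext => N; rewrite -[z in z + x]scale1r bessel_realMD; field.
by apply: cvgMl; apply: cvgB; [apply: cvgB|]; exact: bessel_cvg.
Qed.

Lemma frame_quad_realMD t z x : frame_quad (t%:C%C *: z + x) =
  t ^+ 2 * frame_quad z + 2 * t * frame_polar z x + frame_quad x.
Proof.
have cv : (fun N => bessel N (t%:C%C *: z + x)) @ \oo -->
    t ^+ 2 * frame_quad z + 2 * t * frame_polar z x + frame_quad x.
  under eq_cvg do rewrite bessel_realMD.
  by apply: cvgD; [apply: cvgD|]; try apply: cvgMr;
    [exact: bessel_cvg | exact: bessel_polar_cvg | exact: bessel_cvg].
exact: (cvg_unique (@norm_hausdorff _ R^o) (bessel_cvg _) cv).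
Qed.

Variables (M Ms : V -> V) (A : R).
Hypothesis M_adj : is_adjoint ip M Ms.
Hypothesis A_gt0 : 0 < A.
Hypothesis frame_lb : forall z, ((A * nsq ip (Ms z))%:E <= frame_sum ip z w)%E.

Lemma frame_quad_ge_lb z : A * nsq ip (Ms z) <= frame_quad z.
Proof. by rewrite -lee_fin; apply: le_trans (frame_lb z) (frame_quad_le_sum z). Qed.

Variable u : V.

Definition energy z := frame_quad z / 2 - complex.Re (ip z (M u)).

Lemma energy_lb z : - (nsq ip u / A / 2) <= energy z.
Proof.
have Re_adj : complex.Re (ip z (M u)) = complex.Re (ip u (Ms z)) by rewrite Re_ipC M_adj.
have Ainv_gt0 : 0 < A^-1 by rewrite invr_gt0.
have := ip_amgm _ u (Ms z) Ainv_gt0; rewrite invrK (mulrC A^-1).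
have := frame_quad_ge_lb z; rewrite /energy Re_adj (mulrC A); lra.
Qed.

Definition energy_inf := inf (range energy).

Lemma energy_has_inf : has_inf (range energy).
Proof.
split; first by exists (energy 0), 0.
by exists (- (nsq ip u / A / 2)) => _ [z _ <-]; exact: energy_lb.
Qed.

Lemma energy_inf_le z : energy_inf <= energy z.
Proof. by apply: ge_inf; [case: energy_has_inf | exists z]. Qed.

Lemma energy_inf_adherent e : 0 < e -> exists z, energy z < energy_inf + e.
Proof. by move=> e_gt0; have [_ [z _ <-]] := inf_adherent e_gt0 energy_has_inf; exists z. Qed.

Definition minseq j := projT1 (cid (energy_inf_adherent _ (harmonic_gt0 j))).

Lemma minseq_spec j : energy (minseq j) < energy_inf + harmonic j.
Proof. exact: projT2 (cid (energy_inf_adherent _ (harmonic_gt0 j))). Qed.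

Lemma energy_realMD t z x : energy (t%:C%C *: z + x) =
  energy x + t * (frame_polar z x - complex.Re (ip z (M u))) + t ^+ 2 * frame_quad z / 2.
Proof. by rewrite /energy frame_quad_realMD ip_linearl ReD Re_realM; field. Qed.

(* Compare the energies of [minseq i], [minseq j] and their midpoint. *)
Lemma frame_quad_minseqB i j :
  frame_quad (minseq i - minseq j) <= 4 * (harmonic i + harmonic j).
Proof.
set d := minseq i - minseq j.
have := energy_realMD 1 d (minseq j); rewrite scale1r subrK expr1n mul1r.
have := energy_realMD 2^-1 d (minseq j); have := energy_inf_le (2^-1%:C%C *: d + minseq j).
have := minseq_spec i; have := minseq_spec j; rewrite expr2; lra.
Qed.

Lemma sqmod_coef_minseqB n i j :
  sqmod (coef n (minseq i) - coef n (minseq j)) <= 4 * (harmonic i + harmonic j).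
Proof. rewrite -coefB; exact: le_trans (sqmod_coef_le_quad _ _) (frame_quad_minseqB i j). Qed.

Lemma coef_minseq_cvg n : cvgn (fun j => complex.Re (coef n (minseq j))) /\
                          cvgn (fun j => complex.Im (coef n (minseq j))).
Proof.
have h4 : (fun j => 4 * harmonic j) @ \oo --> (0 : R).
  by rewrite -(mulr0 4); apply: cvgMr; exact: cvg_harmonic.
split; apply: (cvgn_sqr_dist_le _ _ _ h4) => i j; have := sqmod_coef_minseqB n i j;
  rewrite sqmodB mulrDr.
- by have := sqr_ge0 (complex.Im (coef n (minseq i)) - complex.Im (coef n (minseq j))); lra.
- by have := sqr_ge0 (complex.Re (coef n (minseq i)) - complex.Re (coef n (minseq j))); lra.
Qed.

Definition lim_coef n : R[i] := (limn (fun j => complex.Re (coef n (minseq j))) +i*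
                                 limn (fun j => complex.Im (coef n (minseq j))))%C.

Lemma lim_coef_dist j N :
  \sum_(n < N) sqmod (lim_coef n - coef n (minseq j)) <= 4 * harmonic j.
Proof.
have lhs_cvg :
    (fun i => \sum_(n < N) sqmod (coef n (minseq i) - coef n (minseq j))) @ \oo -->
    \sum_(n < N) sqmod (lim_coef n - coef n (minseq j)).
  apply: cvg_big => [|n _]; first exact: add_continuous.
  by have [? ?] := coef_minseq_cvg n; exact: cvgn_sqmodB.
have rhs_cvg :
    (fun i => 4 * (harmonic i + harmonic j)) @ \oo --> (4 * (0 + harmonic j) : R).
  by apply: cvgMr; apply: cvgD; [exact: cvg_harmonic | exact: cvg_cst].
rewrite add0r in rhs_cvg.
apply: ler_cvg_to lhs_cvg rhs_cvg _; apply: nearW => i.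
apply: le_trans (frame_quad_minseqB i j); apply: le_trans (bessel_le_quad N _).
by apply: ler_sum => n _; rewrite coefB.
Qed.

Lemma lim_coef_sum_bounded : exists b, forall N, \sum_(n < N) sqmod (lim_coef n) <= b.
Proof.
exists (8 * harmonic 0 + 2 * frame_quad (minseq 0)) => N.
apply: le_trans (_ : \sum_(n < N) (2 * sqmod (lim_coef n - coef n (minseq 0)) +
                                 2 * sqmod (coef n (minseq 0))) <= _).
  by apply: ler_sum => n _; rewrite -{1}(subrK (coef n (minseq 0)) (lim_coef n)) sqmodD_le.
rewrite big_split -!mulr_sumr.
have := lim_coef_dist 0 N; have := bessel_le_quad N (minseq 0).
by rewrite /bessel; set h0 := harmonic 0; rewrite /=; lra.
Qed.

Lemma lim_coef_l2 : in_l2 lim_coef.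
Proof.
have [b sum_le_b] := lim_coef_sum_bounded.
apply: le_lt_trans (ltry b); apply: nneseries_le_ub sum_le_b => n; exact: sqmod_ge0.
Qed.

(* [minseq j] is [harmonic j]-minimal, so the energy cannot drop by more than
   [harmonic j] along the line through [minseq j] in direction [z], at [t = r] or [-r]. *)
Lemma energy_first_order z j r : 0 < r ->
  `|frame_polar z (minseq j) - complex.Re (ip z (M u))| <=
  harmonic j / r + r * frame_quad z / 2.
Proof.
move=> r_gt0; set delta := _ - _.
have := energy_inf_le (r%:C%C *: z + minseq j).
have := energy_inf_le ((- r)%:C%C *: z + minseq j).
rewrite !energy_realMD sqrrN -/delta; have := minseq_spec j => hj hm hp.
have -> : harmonic j / r + r * frame_quad z / 2 =
    (harmonic j + r ^+ 2 * frame_quad z / 2) / r.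
  by field; rewrite gt_eqF.
by apply/ler_normlP; split; rewrite ler_pdivlMr // ?mulNr; nra.
Qed.

Lemma dot_lim_coef_polar_le z j r N : 0 < r ->
  `|\sum_(n < N) dotc (coef n z) (lim_coef n) - bessel_polar N z (minseq j)| <=
  (r * frame_quad z + 4 * harmonic j / r) / 2.
Proof.
move=> r_gt0; rewrite /bessel_polar -sumrB.
under eq_bigr do rewrite -dotcBr.
have := dotc_sum_amgm 'I_N (index_enum _) xpredT (fun n => coef n z)
  (fun n => lim_coef n - coef n (minseq j)) r r_gt0.
have : r * bessel N z <= r * frame_quad z by rewrite ler_pM2l // bessel_le_quad.
have : (\sum_(n < N) sqmod (lim_coef n - coef n (minseq j))) / r <= 4 * harmonic j / r.
  by rewrite ler_pM2r ?invr_gt0 // lim_coef_dist.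
rewrite /bessel; lra.
Qed.

Lemma dot_lim_coef_cvg z :
  (fun N => \sum_(n < N) dotc (coef n z) (lim_coef n)) @ \oo --> complex.Re (ip z (M u)).
Proof.
apply/cvgrPdist_lt => e e_gt0; set Q := frame_quad z.
have Q1_gt0 : 0 < Q + 1 by have := frame_quad_ge0 z; rewrite -/Q; lra.
set r := e / 3 / (Q + 1).
have r_gt0 : 0 < r by rewrite !divr_gt0.
have rQ_lt : r * Q < e / 3.
  have : r * (Q + 1) = e / 3 by rewrite divfK ?gt_eqF.
  by rewrite mulrDr mulr1; lra.
have re9_gt0 : 0 < r * (e / 9) by rewrite mulr_gt0 ?divr_gt0.
have [j _ small_h] := (cvgrPdist_lt _ _).1 cvg_harmonic _ re9_gt0.
have hr_lt : harmonic j / r < e / 9.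
  move: (small_h j (leqnn j)); rewrite sub0r normrN ger0_norm ?harmonic_ge0 // => hj.
  by rewrite ltr_pdivrMr // mulrC.
have e3_gt0 : 0 < e / 3 by rewrite divr_gt0.
have [N0 _ polar_near] := (cvgrPdist_lt _ _).1 (bessel_polar_cvg z (minseq j)) _ e3_gt0.
exists N0 => // N /polar_near polar_lt.
have := dot_lim_coef_polar_le z j r N r_gt0; have := energy_first_order z j r r_gt0.
rewrite -/Q => first_order dot_polar.
apply: le_lt_trans (ler_distD (frame_polar z (minseq j)) _ _) _.
apply: le_lt_trans (lerD (lexx _) (ler_distD (bessel_polar N z (minseq j)) _ _)) _.
rewrite distrC (distrC (bessel_polar _ _ _)); lra.
Qed.

Lemma Re_ip_synth v (a : nat -> R[i]) m :
  complex.Re (ip v (\sum_(n < m) a n *: w n)) = \sum_(n < m) dotc (coef n v) (a n).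
Proof.
rewrite Re_ipC ip_suml Re_sum; apply: eq_bigr => n _.
by rewrite (ipC v (w n)) Re_mulJ dotcC.
Qed.

Lemma nsq_sub_synth y (a : nat -> R[i]) m (v := y - \sum_(n < m) a n *: w n) :
  nsq ip v = complex.Re (ip v y) - \sum_(n < m) dotc (coef n v) (a n).
Proof. by rewrite /nsq {2}/v ipBr ReB Re_ip_synth. Qed.

Hypothesis B_gt0 : 0 < B.

Lemma tail_dot_le v m N : (m <= N)%N ->
  2 * `|\sum_(m <= n < N) dotc (coef n v) (lim_coef n)| <=
  nsq ip v + B * \sum_(m <= n < N) sqmod (lim_coef n).
Proof.
move=> mN; have Binv_gt0 : 0 < B^-1 by rewrite invr_gt0.
apply: le_trans (dotc_sum_amgm _ _ _ (fun n => coef n v) _ _ Binv_gt0) _.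
rewrite invrK (mulrC _ B) lerD2r mulrC ler_pdivrMr // mulrC.
apply: le_trans (bessel_le_nsq N v).
rewrite /bessel (sum_ord_split (fun n => sqmod (coef n v)) _ _ mN) lerDr.
by apply: sumr_ge0 => n _; exact: sqmod_ge0.
Qed.

(* For the residual [v], [nsq v = Re <v, M u> - Re <v, partial sum>]; by
   [dot_lim_coef_cvg] at [v] this is a tail of the series, at most [nsq v / 2] plus
   a small multiple of a tail of [sum |a_n|^2]. *)
Lemma synth_lim_coef : synth ip w lim_coef (M u).
Proof.
move=> e e_gt0; have [b sum_le_b] := lim_coef_sum_bounded.
have eB_gt0 : 0 < e / (4 * B) by rewrite divr_gt0 ?mulr_gt0.
have [m0 tail_lt] := sum_tail_small _ b (fun n => sqmod_ge0 (lim_coef n)) sum_le_b _ eB_gt0.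
exists m0 => m m0m; set v := M u - _.
have e4_gt0 : 0 < e / 4 by rewrite divr_gt0.
have [N1 _ near_v] := (cvgrPdist_lt _ _).1 (dot_lim_coef_cvg v) _ e4_gt0.
set N := maxn m N1; have mN : (m <= N)%N := leq_maxl _ _.
have := near_v N (leq_maxr m N1).
rewrite (sum_ord_split (fun n => dotc (coef n v) (lim_coef n)) _ _ mN).
move=> /ltr_normlP[_]; have := ler_norm (\sum_(m <= n < N) dotc (coef n v) (lim_coef n)).
have : B * \sum_(m <= n < N) sqmod (lim_coef n) < e / 4.
  by rewrite mulrC -ltr_pdivlMr // -mulrA -invfM tail_lt.
have := tail_dot_le v m N mN; have /= := nsq_sub_synth (M u) lim_coef m.
lra.
Qed.

Lemma exists_l2_synth : exists a, in_l2 a /\ synth ip w a (M u).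
Proof. by exists lim_coef; split; [exact: lim_coef_l2 | exact: synth_lim_coef]. Qed.

End FrameRange.

Lemma Kframe_range_synth {R : realType} {V : lmodType R[i]} {ip : V -> V -> R[i]}
    {M : V -> V} {w : nat -> V} :
  is_inner_product ip -> is_Kframe ip M w ->
  forall u, exists a, in_l2 a /\ synth ip w a (M u).
Proof.
case=> ip_linearl ipC ip_ge0 _ [Ms [M_adj [A [B [A_gt0 [B_gt0 frame]]]]]] u.
exact: (exists_l2_synth _ _ _ ip_linearl ipC ip_ge0 _ _ (fun z => (frame z).2)
  _ _ _ M_adj A_gt0 (fun z => (frame z).1) u B_gt0).
Qed.

Lemma bounded_op0 {R : realType} {V : lmodType R[i]} {ip : V -> V -> R[i]} {K : V -> V} :
  bounded_op ip K -> K 0 = 0.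
Proof.
case=> K_lin _; have := K_lin 1 0 0; rewrite scaler0 add0r scale1r.
by move=> /(congr1 (fun v => v - K 0)); rewrite subrr addrK.
Qed.

Section DirectSum.
Context {R : realType} {V1 V2 : lmodType R[i]}.
Context {ip1 : V1 -> V1 -> R[i]} {ip2 : V2 -> V2 -> R[i]}.

Lemma ip_sum_inner_product :
  is_inner_product ip1 -> is_inner_product ip2 -> is_inner_product (ip_sum ip1 ip2).
Proof.
case=> lin1 C1 ge1 def1 [lin2 C2 ge2 def2]; split.
- by move=> a p q r; rewrite /ip_sum /= lin1 lin2; ring.
- by move=> p q; rewrite /ip_sum C1 C2 rmorphD.
- by move=> p; rewrite /ip_sum ReD addr_ge0.
move=> [p1 p2]; rewrite /ip_sum /= => sum_eq0.
have := ge1 p1; have := ge2 p2; have := congr1 (@complex.Re R) sum_eq0.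
rewrite ReD /= => Re_eq0 Re2 Re1.
have Re1_eq0 : complex.Re (ip1 p1 p1) = 0 by lra.
have Re2_eq0 : complex.Re (ip2 p2 p2) = 0 by lra.
have -> := def1 _ (eq0_conjc_Re0 _ (C1 _ _) Re1_eq0).
by have -> := def2 _ (eq0_conjc_Re0 _ (C2 _ _) Re2_eq0).
Qed.

Lemma sum_scale_seq_sum (x : nat -> V1) (y : nat -> V2) (a : nat -> R[i]) m :
  \sum_(n < m) a n *: seq_sum x y n = (\sum_(n < m) a n *: x n, \sum_(n < m) a n *: y n).
Proof. by elim: m => [|m IH]; rewrite ?big_ord0 // !big_ord_recr IH. Qed.

Lemma synth_seq_sum {x : nat -> V1} {y : nat -> V2} {a : nat -> R[i]} {p1 p2} :
  (forall v, 0 <= complex.Re (ip1 v v)) -> (forall v, 0 <= complex.Re (ip2 v v)) ->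
  synth (ip_sum ip1 ip2) (seq_sum x y) a (p1, p2) -> synth ip1 x a p1 /\ synth ip2 y a p2.
Proof.
move=> ge1 ge2 synth_xy; split=> e /synth_xy[N near_N]; exists N => m /near_N;
  rewrite sum_scale_seq_sum /nsq /ip_sum /= ReD.
- by have := ge2 (p2 - \sum_(n < m) a n *: y n); lra.
- by have := ge1 (p1 - \sum_(n < m) a n *: x n); lra.
Qed.

End DirectSum.

Theorem proposition2p12 (R : realType)
  (V1 V2 : lmodType R[i])
  (ip1 : V1 -> V1 -> R[i]) (ip2 : V2 -> V2 -> R[i])
  (hH1 : is_hilbert ip1) (hH2 : is_hilbert ip2)
  (sH1 : separable ip1) (sH2 : separable ip2)
  (K : V1 -> V1) (L : V2 -> V2)
  (hK : bounded_op ip1 K) (hL : bounded_op ip2 L)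
  (x : nat -> V1) (y : nat -> V2)
  (hx : is_Kframe ip1 K x) (hy : is_Kframe ip2 L y)
  (hxy : is_Kframe (ip_sum ip1 ip2) (op_sum K L) (seq_sum x y)) :
  (* R(K) ⊂ T1(N(T2)) *)
  (forall k : V1, (exists u, K u = k) ->
     exists a : nat -> R[i], in_l2 a /\ synth ip2 y a 0 /\ synth ip1 x a k) /\
  (* R(L) ⊂ T2(N(T1)) *)
  (forall l : V2, (exists u, L u = l) ->
     exists a : nat -> R[i], in_l2 a /\ synth ip1 x a 0 /\ synth ip2 y a l).
Proof.
have [ip1_inner _] := hH1; have [ip2_inner _] := hH2.
have [_ _ ge1 _] := ip1_inner; have [_ _ ge2 _] := ip2_inner.
have range_synth := Kframe_range_synth (ip_sum_inner_product ip1_inner ip2_inner) hxy.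
split.
- move=> _ [u <-]; have [a [a_l2]] := range_synth (u, 0).
  rewrite /op_sum /= (bounded_op0 hL) => /(synth_seq_sum ge1 ge2)[synth_x synth_y].
  by exists a.
- move=> _ [u <-]; have [a [a_l2]] := range_synth (0, u).
  rewrite /op_sum /= (bounded_op0 hK) => /(synth_seq_sum ge1 ge2)[synth_x synth_y].
  by exists a.
Qed.
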